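(* Let $n$ be a positive integer. Then for all complex numbers $x$ and $y$ with $y\neq -1$, $$\sum_{r=2}^{n+1}\frac{(-1)^rB_{r}(x)}{r}\binom{n-1}{r-2}\binom{y}{r-1}=\sum_{r=1}^{n}\binom{n-1}{r-1}\binom{y+n-r}{n}\left(\frac{B_{r+1}(-x)}{r+1}+\frac{B_{r}(-x)}{r}\right)+\frac{1}{y+1}\binom{y+n}{n+1}.$$
   Context: The Bernoulli polynomials $B_n(x)$ are defined by $\sum_{n=0}^\infty\frac{B_n(x)}{n!}t^n=\frac{te^{xt}}{e^t-1}$. For a complex number $y$ and an integer $k\ge0$, $\binom{y}{k}=\frac{y(y-1)\cdots(y-k+1)}{k!}$; for ordinary integer binomial coefficients $\binom{a}{b}$ with $a\ge 0$ and $b<0$ or $b>a$, $\binom{a}{b}=0$. *)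

From HB Require Import structures.
From mathcomp Require Import all_boot all_order all_algebra.
From mathcomp Require Import complex.
From mathcomp Require Import Rstruct.
Set Implicit Arguments. Unset Strict Implicit. Unset Printing Implicit Defensive.
Import Order.TTheory GRing.Theory Num.Theory.
Local Open Scope ring_scope.

Notation CC := (complex Rdefinitions.R).

(* Bernoulli polynomials, defined by the generating function
     sum_n B_n(x) t^n / n! = t e^{xt} / (e^t - 1).
   Multiplying by (e^t - 1) and comparing the coefficients of t^(m+1) gives
     sum_{k=0}^{m} 'C(m+1,k) B_k(x) = (m+1) x^m,   for all m,
   which determines the B_m(x) recursively:
     B_m(x) = x^m - (m+1)^{-1} sum_{k<m} 'C(m+1,k) B_k(x).
   [bern_seq m x] is the list [:: B_0(x); ...; B_m(x)]. *)
Fixpoint bern_seq (m : nat) (x : CC) : seq CC :=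
  match m with
  | 0 => [:: 1]
  | m'.+1 =>
      let s := bern_seq m' x in
      rcons s (x ^+ m - (m.+1)%:R^-1 * \sum_(k < m) ('C(m.+1, k))%:R * s`_k)
  end.

Definition bernoulli_poly (m : nat) (x : CC) : CC := (bern_seq m x)`_m.

Definition binomC (y : CC) (k : nat) : CC :=
  (\prod_(i < k) (y - i%:R)) / (k`!)%:R.

From HB Require Import structures.
From mathcomp Require Import all_boot all_order all_algebra.
From mathcomp Require Import complex Rstruct.
From mathcomp Require Import ring.
Set Implicit Arguments. Unset Strict Implicit. Unset Printing Implicit Defensive.
Import Order.TTheory GRing.Theory Num.Theory.
Local Open Scope ring_scope.

(* Put m = n - 1 and c_j = (-1)^j B_{j+2}(x) / (j+2), so that the left side is
   sum_i C(m,i) binom(y, i+1) c_i.  Iterating Pascal's rule gives the binomial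
   transform
     sum_i C(m,i) binom(y, i+s) w_i
       = sum_i C(m,i) binom(y+m-i, m+s) (Delta^i w)_0.
   Apply it to w_j = c_j - 1/(j+2): by the reflection formula
   B_k(-x) = (-1)^k sum_j C(k,j) B_j(x), its i-th difference is exactly
   B_{i+2}(-x)/(i+2) + B_{i+1}(-x)/(i+1).  The rest,
   sum_i C(m,i) binom(y,i+1)/(i+2), equals binom(y+n, n+1)/(y+1) by the
   absorption binom(y,i+1)/(i+2) = binom(y+1,i+2)/(y+1) and the transform
   with w = 1. *)

Section BinomialSums.
Variable R : comPzRingType.
Implicit Types (a w : nat -> R).

Lemma big_ord_binS a n :
  \sum_(i < n.+2) 'C(n.+1, i)%:R * a i =
  \sum_(i < n.+1) 'C(n, i)%:R * a i + \sum_(i < n.+1) 'C(n, i)%:R * a i.+1.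
Proof.
rewrite big_ord_recl bin0.
under eq_bigr => i _ do rewrite binS natrD mulrDl.
rewrite big_split /= addrA [X in _ = X + _]big_ord_recl bin0.
by rewrite big_ord_recr /= bin_small // mul0r addr0.
Qed.

Lemma big_ord_bin_widen a k m : (k <= m)%N ->
  \sum_(j < k.+1) 'C(k, j)%:R * a j = \sum_(j < m.+1) 'C(k, j)%:R * a j.
Proof.
rewrite -ltnS => le_km.
rewrite (big_ord_widen _ (fun j => 'C(k, j)%:R * a j) le_km).
rewrite big_mkcond; apply: eq_bigr => j _; case: ltnP => // lt_kj.
by rewrite bin_small // mul0r.
Qed.

Lemma sum_bin_binM_sign_eq0 N j : (j < N)%N ->
  \sum_(k < N.+1) 'C(N, k)%:R * ('C(k, j)%:R * (-1) ^+ k) = 0 :> R.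
Proof.
elim: N j => [|N IH] [|j] // lt_jN.
all: rewrite (big_ord_binS (fun k => 'C(k, _)%:R * (-1) ^+ k)) -big_split /=.
  by apply: big1 => i _; rewrite !bin0 exprS; ring.
transitivity (- \sum_(k < N.+1) 'C(N, k)%:R * ('C(k, j)%:R * (-1) ^+ k) : R).
  by rewrite -sumrN; apply: eq_bigr => i _; rewrite binS natrD exprS; ring.
by rewrite IH ?oppr0.
Qed.

Lemma sum_bin_binM_sign m j : (j <= m)%N ->
  \sum_(k < m.+1) 'C(m.+1, k)%:R * ('C(k, j)%:R * (-1) ^+ k) =
  (-1) ^+ m * 'C(m.+1, j)%:R :> R.
Proof.
rewrite -ltnS => /(@sum_bin_binM_sign_eq0 m.+1); rewrite big_ord_recr /= binn.
by move/eqP; rewrite addr_eq0 => /eqP ->; rewrite exprS; ring.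
Qed.

Definition fwd_diff w i k : R :=
  \sum_(l < i.+1) 'C(i, l)%:R * ((-1) ^+ (i - l) * w (l + k)%N).

Lemma fwd_diff0 w k : fwd_diff w 0 k = w k.
Proof. by rewrite /fwd_diff big_ord1 bin0 subnn expr0 !mul1r add0n. Qed.

Lemma fwd_diffS w i k : fwd_diff w i.+1 k = fwd_diff w i k.+1 - fwd_diff w i k.
Proof.
rewrite /fwd_diff (big_ord_binS (fun l => (-1) ^+ (i.+1 - l) * w (l + k)%N)).
rewrite addrC.
congr (_ + _).
  by apply: eq_bigr => l _; rewrite subSS addSnnS.
rewrite -sumrN; apply: eq_bigr => l _.
by rewrite subSn 1?exprS; [ring | rewrite -ltnS].
Qed.

Lemma fwd_diff_shift w i k : fwd_diff (w \o succn) i k = fwd_diff w i k.+1.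
Proof. by apply: eq_bigr => l _; rewrite /= addnS. Qed.

Lemma fwd_diffB w1 w2 i k :
  fwd_diff (fun j => w1 j - w2 j) i k = fwd_diff w1 i k - fwd_diff w2 i k.
Proof. by rewrite /fwd_diff -sumrB; apply: eq_bigr => l _; ring. Qed.

Lemma fwd_diff_cst c i k : fwd_diff (fun _ => c) i.+1 k = 0.
Proof. by elim: i k => [|i IH] k; rewrite fwd_diffS ?fwd_diff0 ?IH subrr. Qed.

End BinomialSums.

Lemma eq_from_sum_binS (R : numDomainType) (a b : nat -> R) :
  (forall m, \sum_(k < m.+1) 'C(m.+1, k)%:R * a k =
             \sum_(k < m.+1) 'C(m.+1, k)%:R * b k) ->
  a =1 b.
Proof.
move=> eq_ab; elim/ltn_ind => m IH; have := eq_ab m.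
rewrite !big_ord_recr /= binSn (eq_bigr (fun k : 'I_m => 'C(m.+1, k)%:R * b k)).
  by move/addrI/mulfI; apply; rewrite pnatr_eq0.
by move=> k _; rewrite IH.
Qed.

Lemma size_bern_seq m x : size (bern_seq m x) = m.+1.
Proof. by elim: m => //= m IH; rewrite size_rcons IH. Qed.

Lemma nth_bern_seq m k x : (k <= m)%N -> (bern_seq m x)`_k = bernoulli_poly k x.
Proof.
elim: m => [|m IH]; first by rewrite leqn0 => /eqP ->.
rewrite leq_eqVlt => /predU1P[-> // | lt_km].
by rewrite /= nth_rcons size_bern_seq lt_km IH.
Qed.

Lemma bernoulli_poly0 x : bernoulli_poly 0 x = 1.
Proof. by []. Qed.

Lemma bernoulli_polyS m x : bernoulli_poly m.+1 x = x ^+ m.+1 -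
  (m.+2)%:R^-1 * \sum_(k < m.+1) 'C(m.+2, k)%:R * bernoulli_poly k x.
Proof.
rewrite /bernoulli_poly /= nth_rcons size_bern_seq ltnn eqxx.
by congr (_ - _ * _); apply: eq_bigr => k _; rewrite nth_bern_seq // -ltnS.
Qed.

Lemma sum_bin_bernoulli_poly m x :
  \sum_(k < m.+1) 'C(m.+1, k)%:R * bernoulli_poly k x = (m.+1)%:R * x ^+ m.
Proof.
case: m => [|m]; first by rewrite big_ord1 bernoulli_poly0 mulr1.
rewrite big_ord_recr /= binSn bernoulli_polyS mulrBr mulrA mulfV ?pnatr_eq0 //.
by rewrite mul1r addrC subrK.
Qed.

(* Reflection formula B_k(-x) = (-1)^k B_k(x + 1), with B_k(x + 1) expanded. *)
Lemma bernoulli_polyN k x : bernoulli_poly k (- x) =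
  (-1) ^+ k * \sum_(j < k.+1) 'C(k, j)%:R * bernoulli_poly j x.
Proof.
move: k; apply: eq_from_sum_binS => m; rewrite sum_bin_bernoulli_poly.
transitivity (\sum_(k < m.+1) \sum_(j < m.+1)
   'C(m.+1, k)%:R * ('C(k, j)%:R * (-1) ^+ k) * bernoulli_poly j x).
  rewrite exchange_big /= exprNn mulrCA -sum_bin_bernoulli_poly mulr_sumr.
  apply: eq_bigr => j _; rewrite -mulr_suml sum_bin_binM_sign -1?ltnS //; ring.
apply: eq_bigr => k _.
rewrite (big_ord_bin_widen (bernoulli_poly^~ x) (ltn_ord k : (k <= m)%N)).
by rewrite !mulr_sumr; apply: eq_bigr => j _; ring.
Qed.

Lemma natrS_neq0 m : (m.+1)%:R != 0 :> CC.
Proof. by rewrite pnatr_eq0. Qed.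

Lemma natr_fact_neq0 m : (m`!)%:R != 0 :> CC.
Proof. by rewrite pnatr_eq0 -lt0n fact_gt0. Qed.

Lemma binomCSr z m : binomC z m.+1 = binomC z m * (z - m%:R) / (m.+1)%:R.
Proof.
rewrite /binomC big_ord_recr /= factS natrM.
by field; rewrite nat1r natrS_neq0 natr_fact_neq0.
Qed.

Lemma binomC_addr1S z m :
  binomC (z + 1) m.+1 = (z + 1) * binomC z m / (m.+1)%:R.
Proof.
rewrite /binomC big_ord_recl subr0 factS natrM.
under eq_bigr => i _ do rewrite /bump /= -natr1 opprD addrACA subrr addr0.
by field; rewrite nat1r natrS_neq0 natr_fact_neq0.
Qed.

Lemma binomC_pascal z m : binomC z m + binomC z m.+1 = binomC (z + 1) m.+1.
Proof.
rewrite binomCSr binomC_addr1S.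
by field; rewrite nat1r natrS_neq0.
Qed.

(* Proved by induction on [n]: [big_ord_binS] splits the left side into the
   instances [(s, w)] and [(s + 1, w \o succn)], and [binomC_pascal]
   recombines the right side. *)
Lemma sum_bin_binomC_fwd_diff y n s (w : nat -> CC) :
  \sum_(i < n.+1) 'C(n, i)%:R * (binomC y (i + s) * w i) =
  \sum_(i < n.+1)
    'C(n, i)%:R * (binomC (y + (n - i)%:R) (n + s) * fwd_diff w i 0).
Proof.
elim: n s w => [|n IH] s w.
  by rewrite !big_ord1 bin0 subnn addr0 !add0n fwd_diff0.
rewrite (big_ord_binS (fun i => binomC y (i + s) * w i)).
under [X in _ + X = _]eq_bigr => i _ do rewrite addSnnS.
rewrite (IH s) (IH s.+1 (w \o succn)).
rewrite (big_ord_binS (fun i =>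
  binomC (y + (n.+1 - i)%:R) (n.+1 + s) * fwd_diff w i 0)).
rewrite -!big_split; apply: eq_bigr => i _ /=.
rewrite subSS fwd_diffS subSn -1?ltnS // -natr1 addrA -binomC_pascal.
rewrite addSn addnS.
by rewrite fwd_diff_shift; ring.
Qed.

Lemma fwd_diff_natrS2_inv i k :
  fwd_diff (fun j => (j.+2)%:R^-1) i k =
  (-1) ^+ i * (i`!)%:R * ((k.+1)`!)%:R / (((k + i).+2)`!)%:R :> CC.
Proof.
elim: i k => [|i IH] k.
  rewrite fwd_diff0 addn0 expr0 fact0 (factS k.+1) natrM.
  have F_neq0 := natr_fact_neq0 k.+1.
  move: ((k.+1)`!)%:R F_neq0 => F F_neq0.
  by field; rewrite -natrD pnatr_eq0 add2n andbT; exact: F_neq0.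
rewrite fwd_diffS !IH addSn addnS (factS (k + i).+2) (factS k.+1) (factS i).
rewrite (natrM _ (k + i).+3) (natrM _ k.+2) (natrM _ i.+1) exprS.
have F_neq0 := natr_fact_neq0 (k + i).+2.
move: (((k + i).+2)`!)%:R F_neq0 => F F_neq0.
by field; rewrite -!natrD pnatr_eq0 add3n andbT; exact: F_neq0.
Qed.

Lemma bernoulli_polyN_div k x : bernoulli_poly k.+1 (- x) / (k.+1)%:R =
  (-1) ^+ k.+1 * ((k.+1)%:R^-1 + bernoulli_poly 1 x +
    \sum_(l < k.+1) 'C(k, l.+1)%:R * (bernoulli_poly l.+2 x / (l.+2)%:R)).
Proof.
rewrite [in RHS]big_ord_recr /= bin_small // mul0r addr0 bernoulli_polyN.
rewrite [in LHS]big_ord_recl [in LHS]big_ord_recl /= /bump /=.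
rewrite bin0 bin1 bernoulli_poly0 mulr1 -mulrA addrA mulrDl mulr_suml.
congr (_ * (_ + _)).
  by field; rewrite nat1r natrS_neq0.
apply: eq_bigr => l _; rewrite !add1n.
have /(congr1 (GRing.natmul (1 : CC))) := mul_bin_diag k.+1 l.+1.
rewrite !natrM /= => bin_diag.
have -> : 'C(k.+1, l.+2)%:R = (k.+1)%:R * 'C(k, l.+1)%:R / (l.+2)%:R :> CC.
  by rewrite bin_diag mulrAC mulfV ?mul1r ?natrS_neq0.
by field; rewrite nat1r natrS_neq0 -natrD pnatr_eq0.
Qed.

Definition bern_coef x j : CC :=
  (-1) ^+ j * bernoulli_poly j.+2 x / (j.+2)%:R.

Lemma fwd_diff_bern_coef x i : fwd_diff (bern_coef x) i 0 =
  (-1) ^+ i * \sum_(l < i.+1) 'C(i, l)%:R * (bernoulli_poly l.+2 x / (l.+2)%:R).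
Proof.
rewrite /fwd_diff mulr_sumr; apply: eq_bigr => l _; rewrite /bern_coef addn0.
have sign_l : (-1) ^+ (i - l) * (-1) ^+ l = (-1) ^+ i :> CC.
  by rewrite -exprD subnK // -ltnS.
by rewrite -sign_l; ring.
Qed.

Lemma fwd_diff_bern_coef_inv x i :
  fwd_diff (fun j => bern_coef x j - (j.+2)%:R^-1) i 0 =
  bernoulli_poly i.+2 (- x) / (i.+2)%:R + bernoulli_poly i.+1 (- x) / (i.+1)%:R.
Proof.
rewrite fwd_diffB fwd_diff_bern_coef fwd_diff_natrS2_inv !bernoulli_polyN_div.
set b := fun l => bernoulli_poly l.+2 x / (l.+2)%:R.
have sum_binS : \sum_(l < i.+2) 'C(i.+1, l.+1)%:R * b l =
    \sum_(l < i.+1) 'C(i, l.+1)%:R * b l + \sum_(l < i.+1) 'C(i, l)%:R * b l.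
  rewrite big_ord_recr /= bin_small // mul0r addr0 -big_split /=.
  by apply: eq_bigr => l _; rewrite binS natrD mulrDl addrC.
rewrite sum_binS add0n !factS fact0 muln1 !natrM !exprS -/b.
have F_neq0 := natr_fact_neq0 i.
move: (i`!)%:R F_neq0 (\sum_(l < i.+1) 'C(i, l.+1)%:R * b l)
  (\sum_(l < i.+1) 'C(i, l)%:R * b l) => F F_neq0 S T.
by field; rewrite nat1r -natrD !pnatr_eq0 add2n; exact: F_neq0.
Qed.

Lemma sum_bin_binomC_div y m : y + 1 != 0 ->
  \sum_(i < m.+1) 'C(m, i)%:R * (binomC y (i + 1) * (i.+2)%:R^-1) =
  (y + 1)^-1 * binomC (y + (m.+1)%:R) m.+2.
Proof.
move=> y1_neq0.
transitivity ((y + 1)^-1 *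
    \sum_(i < m.+1) 'C(m, i)%:R * (binomC (y + 1) (i + 2) * 1)).
  rewrite mulr_sumr; apply: eq_bigr => i _; rewrite addn1 addn2 binomC_addr1S.
  by field; rewrite -natrD pnatr_eq0 add2n y1_neq0.
rewrite (sum_bin_binomC_fwd_diff _ _ _ (fun=> 1)) big_ord_recl big1 => [|i _].
  by rewrite bin0 subn0 fwd_diff0 addr0 !mulr1 mul1r -addrA nat1r addn2.
by rewrite fwd_diff_cst !mulr0.
Qed.

Theorem mainTheorem2 (n : nat) (x y : CC) :
  (0 < n)%N -> y != -1 ->
  \sum_(2 <= r < n.+2)
     ((-1) ^+ r * bernoulli_poly r x / r%:R * ('C(n.-1, r - 2))%:R
        * binomC y (r.-1))
  = \sum_(1 <= r < n.+1)
      (('C(n.-1, r.-1))%:R * binomC (y + (n - r)%:R) n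
        * (bernoulli_poly r.+1 (- x) / (r.+1)%:R
           + bernoulli_poly r (- x) / r%:R))
    + (y + 1)^-1 * binomC (y + n%:R) n.+1.
Proof.
case: n => [//|m] _; rewrite -addr_eq0 succnK => y1_neq0.
have -> : \sum_(2 <= r < m.+3) ((-1) ^+ r * bernoulli_poly r x / r%:R
                                  * 'C(m, r - 2)%:R * binomC y r.-1) =
    \sum_(i < m.+1) 'C(m, i)%:R * (binomC y (i + 1) * bern_coef x i).
  rewrite (big_addn 0 _ 2) (_ : (m.+3 - 2 = m.+1)%N) // big_mkord.
  apply: eq_bigr => i _.
  by rewrite addnK addn2 succnK addn1 /bern_coef !exprS; ring.
have -> : \sum_(1 <= r < m.+2)
      ('C(m, r.-1)%:R * binomC (y + (m.+1 - r)%:R) m.+1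
        * (bernoulli_poly r.+1 (- x) / (r.+1)%:R
           + bernoulli_poly r (- x) / r%:R)) =
    \sum_(i < m.+1) 'C(m, i)%:R * (binomC (y + (m - i)%:R) (m + 1)
            * fwd_diff (fun j => bern_coef x j - (j.+2)%:R^-1) i 0).
  rewrite (big_addn 0 _ 1) (_ : (m.+2 - 1 = m.+1)%N) // big_mkord.
  apply: eq_bigr => i _.
  by rewrite fwd_diff_bern_coef_inv !addn1 subSS succnK mulrA.
rewrite -(sum_bin_binomC_div m y1_neq0) -sum_bin_binomC_fwd_diff -big_split.
by apply: eq_bigr => i _; rewrite /= -!mulrDr subrK.
Qed.
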